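(* Let $A=[a_{ij}]\in M_{m,n}(\mathbb{R})$ have rank $r>1$ and be diagonally eliminable up to $r$, and let $k$ be an integer with $0\leq k<r$. Then $A^{(2k)}=[a^{(2k)}_{ij}]$ has as its first $k$ columns the first $k$ columns of the $m\times m$ identity matrix (i.e. $a^{(2k)}_{ij}=\delta_{ij}$ for $1\leq j\leq k$), and for $k+1\leq j\leq n$, $$a^{(2k)}_{ij}=\begin{cases}(-1)^{k+i}\dfrac{m^{1\dots k}_{1\dots i-1,\,i+1\dots k,\,j}}{m_k} & \text{if } 1\leq i\leq k,\\[2mm] \dfrac{m^{1\dots k\, i}_{1\dots k\, j}}{m_k} & \text{if } k+1\leq i\leq m.\end{cases}$$
   Context: Gauss-Jordan procedure: for $A\in M_{m,n}(\mathbb{R})$ set $A^{(0)}=A$. For $k\geq 0$, if $A^{(2k)}=[a^{(2k)}_{ij}]$ is defined and $a^{(2k)}_{k+1,k+1}\neq 0$, let $\mathcal{G}_{2k+1}$ be the $m\times m$ diagonal matrix with all diagonal entries $1$ except the $(k+1,k+1)$ entry, which is $1/a^{(2k)}_{k+1,k+1}$, and set $A^{(2k+1)}=\mathcal{G}_{2k+1}A^{(2k)}=[a^{(2k+1)}_{ij}]$; then let $\mathcal{G}_{2k+2}=[g_{ij}]_{m\times m}$ with $g_{ii}=1$, $g_{i,k+1}=-a^{(2k+1)}_{i,k+1}$ for $i\neq k+1$, and all other entries $0$, and set $A^{(2k+2)}=\mathcal{G}_{2k+2}A^{(2k+1)}$. A matrix $A$ of rank $r\geq 1$ is diagonally eliminable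 up to $r$ if for each $k=1,\dots,r$ the matrix $A^{(2k-2)}$ is defined and $a^{(2k-2)}_{kk}\neq 0$. Minors: for $1\leq i_1<\dots<i_p\leq m$, $1\leq j_1<\dots<j_p\leq n$, $m^{i_1\dots i_p}_{j_1\dots j_p}$ is the determinant of the submatrix of $A$ with rows $i_1,\dots,i_p$ and columns $j_1,\dots,j_p$; thus $m^{1\dots k}_{1\dots i-1,\,i+1\dots k,\,j}$ uses rows $1,\dots,k$ and columns $1,\dots,k$ with $i$ removed and $j$ appended, and $m^{1\dots k\,i}_{1\dots k\,j}$ uses rows $1,\dots,k,i$ and columns $1,\dots,k,j$. $m_k=m^{1\dots k}_{1\dots k}$ and $m_0=1$. *)

From HB Require Import structures.
From mathcomp Require Import all_boot all_order all_algebra.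
From mathcomp Require Import all_classical all_reals.
Set Implicit Arguments. Unset Strict Implicit. Unset Printing Implicit Defensive.
Import Order.TTheory GRing.Theory Num.Theory.
Local Open Scope ring_scope.

(* All indices below are 0-based: paper's row/column i corresponds to i-1 here. *)

(* entry of a matrix at nat indices (0 outside the range) *)
Definition ent (R : ringType) (m n : nat) (A : 'M[R]_(m, n)) (i j : nat) : R :=
  match @insub nat (fun x => x < m)%N 'I_m i, @insub nat (fun x => x < n)%N 'I_n j with
  | Some i', Some j' => A i' j'
  | _, _ => 0
  end.

Definition GJ_G1 (R : fieldType) (m n : nat) (A : 'M[R]_(m, n)) (k : nat) : 'M[R]_m :=
  \matrix_(i < m, l < m)
    (if i == l then (if (i == k :> nat) then (ent A k k)^-1 else 1) else 0).

Definition GJ_G2 (R : fieldType) (m n : nat) (B : 'M[R]_(m, n)) (k : nat) : 'M[R]_m :=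
  \matrix_(i < m, l < m)
    (if i == l then 1 else if (l == k :> nat) then - ent B i l else 0).

(* A^{(2k)} *)
Fixpoint GJ2 (R : fieldType) (m n : nat) (A : 'M[R]_(m, n)) (k : nat) : 'M[R]_(m, n) :=
  match k with
  | 0 => A
  | k'.+1 =>
      let A0 := GJ2 A k' in
      let A1 := GJ_G1 A0 k' *m A0 in
      GJ_G2 A1 k' *m A1
  end.

Definition GJ (R : fieldType) (m n : nat) (A : 'M[R]_(m, n)) (p : nat) : 'M[R]_(m, n) :=
  if odd p then GJ_G1 (GJ2 A p./2) p./2 *m GJ2 A p./2 else GJ2 A p./2.

Definition diag_elim (R : fieldType) (m n : nat) (A : 'M[R]_(m, n)) (r : nat) : Prop :=
  forall k : nat, (1 <= k <= r)%N -> ent (GJ A (2 * k - 2)) k.-1 k.-1 != 0.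

Definition minor (R : comRingType) (m n : nat) (A : 'M[R]_(m, n)) (rs cs : seq nat) : R :=
  \det (\matrix_(a < size rs, b < size rs) ent A (nth 0%N rs a) (nth 0%N cs b)).

Definition lead_minor (R : comRingType) (m n : nat) (A : 'M[R]_(m, n)) (k : nat) : R :=
  minor A (iota 0 k) (iota 0 k).

(* Each Gauss-Jordan step is a left multiplication, so A^(2k) = E A where, inductively,
   the first k columns of A^(2k) and the last m - k columns of E are unit vectors.  For a
   row set S consisting of the first k rows, possibly together with one row i >= k, the
   S-rows of A^(2k) thus only involve the S-rows of A, and for any column set C of the
   same size A^(2k)[S,C] = E[S,S] A[S,C], where det E[S,S] = det E[1..k,1..k] = 1/m_k
   (take S = C = {1..k}).  When all but one column of C are among the first k, the
   left-hand determinant is a single entry of A^(2k), up to sign. *)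

From HB Require Import structures.
From mathcomp Require Import all_boot all_order all_algebra.
From mathcomp Require Import all_classical all_reals.
From mathcomp Require Import zify.
Import Order.TTheory GRing.Theory Num.Theory.
Local Open Scope ring_scope.
Set Implicit Arguments. Unset Strict Implicit.

Section Entries.
Variable R : nzRingType.

Lemma entE m n (A : 'M[R]_(m, n)) (i : 'I_m) (j : 'I_n) : ent A i j = A i j.
Proof. by rewrite /ent !valK. Qed.

Lemma ent_row_oob m n (A : 'M[R]_(m, n)) x y : (m <= x)%N -> ent A x y = 0.
Proof. by move=> hx; rewrite /ent insubN // -leqNgt. Qed.

Lemma ent_col_oob m n (A : 'M[R]_(m, n)) x y : (n <= y)%N -> ent A x y = 0.
Proof. by move=> hy; rewrite /ent (insubN 'I_n (x := y)) -?leqNgt //; case: insub. Qed.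

Lemma ent_neq0 m n (A : 'M[R]_(m, n)) x y : ent A x y != 0 -> (x < m)%N /\ (y < n)%N.
Proof.
move=> hA; split; rewrite ltnNge; apply: contra hA => h.
  by rewrite ent_row_oob.
by rewrite ent_col_oob.
Qed.

Lemma ent_mulmx m n p (A : 'M[R]_(m, n)) (B : 'M[R]_(n, p)) x y :
  ent (A *m B) x y = \sum_(l < n) ent A x l * ent B l y.
Proof.
have [hx|hx] := ltnP x m; last first.
  by rewrite ent_row_oob // big1 // => l _; rewrite ent_row_oob ?mul0r.
have [hy|hy] := ltnP y p; last first.
  by rewrite ent_col_oob // big1 // => l _; rewrite (ent_col_oob _ _ hy) mulr0.
rewrite -[x]/(val (Ordinal hx)) -[y]/(val (Ordinal hy)) entE mxE.
by apply: eq_bigr => l _; rewrite !entE.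
Qed.

End Entries.

Section GaussJordanStep.
Variables (R : fieldType) (m n : nat).

Lemma GJ_even (A : 'M[R]_(m, n)) p : GJ A (2 * p) = GJ2 A p.
Proof. by rewrite /GJ mul2n odd_double doubleK. Qed.

Lemma GJ_G1_mulmxE (B : 'M[R]_(m, n)) k (i : 'I_m) j :
  (GJ_G1 B k *m B) i j = if i == k :> nat then (ent B k k)^-1 * B i j else B i j.
Proof.
rewrite mxE (bigD1 i) //= big1 ?addr0 => [|l /negbTE hl]; last first.
  by rewrite mxE eq_sym hl mul0r.
by rewrite mxE eqxx; case: ifP; rewrite ?mul1r.
Qed.

Lemma GJ_G2_mulmxE (C : 'M[R]_(m, n)) k (i : 'I_m) j : (k < m)%N ->
  (GJ_G2 C k *m C) i j =
    if i == k :> nat then C i j else C i j - ent C i k * ent C k j.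
Proof.
move=> hk; pose kk := Ordinal hk.
rewrite mxE (bigD1 i) //= mxE eqxx mul1r.
have [ik|ik] := eqVneq (val i) k.
  rewrite big1 ?addr0 // => l il; rewrite mxE eq_sym (negbTE il) -ik (inj_eq val_inj).
  by rewrite (negbTE il) mul0r.
have ikk : i != kk by rewrite -(inj_eq val_inj).
rewrite (bigD1 kk) 1?eq_sym //= big1 ?addr0 => [|l /andP [li lk]]; last first.
  by rewrite mxE eq_sym (negbTE li) -[k]/(val kk) (inj_eq val_inj) (negbTE lk) mul0r.
by rewrite mxE (negbTE ikk) eqxx mulNr -[ent C k j]/(ent C kk j) entE.
Qed.

Lemma col_GJ_G1 (B : 'M[R]_(m, n)) k (l : 'I_m) : l != k :> nat ->
  col l (GJ_G1 B k) = col l 1%:M.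
Proof.
move=> lk; apply/colP => i; rewrite !mxE.
by have [->|] := eqVneq i l; rewrite ?(negbTE lk).
Qed.

Lemma col_GJ_G2 (B : 'M[R]_(m, n)) k (l : 'I_m) : l != k :> nat ->
  col l (GJ_G2 B k) = col l 1%:M.
Proof. by move=> lk; apply/colP => i; rewrite !mxE (negbTE lk); case: eqP. Qed.

Lemma col_mulmx_unit p (X Y : 'M[R]_p) (l : 'I_p) :
  col l X = col l 1%:M -> col l Y = col l 1%:M -> col l (X *m Y) = col l 1%:M.
Proof.
by move=> hX hY; rewrite colE -mulmxA -colE hY colE mul1mx -colE hX colE mul1mx.
Qed.

End GaussJordanStep.

Section SquareSubmatrices.
Variable R : comNzRingType.

Definition square_submx p q (M : 'M[R]_(p, q)) N (rf cf : nat -> nat) : 'M[R]_N :=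
  \matrix_(a < N, b < N) ent M (rf a) (cf b).

Lemma minor_square_submx p q (M : 'M[R]_(p, q)) (rs cs : seq nat) N : size rs = N ->
  minor M rs cs = \det (square_submx M N (nth 0%N rs) (nth 0%N cs)).
Proof. by move=> h; case: N / h. Qed.

Lemma eq_square_submx p q (M : 'M[R]_(p, q)) N rf cf rf' cf' :
  (forall a, (a < N)%N -> rf a = rf' a) -> (forall b, (b < N)%N -> cf b = cf' b) ->
  square_submx M N rf cf = square_submx M N rf' cf'.
Proof. by move=> erf ecf; apply/matrixP => a b; rewrite !mxE erf ?ecf. Qed.

Lemma square_submx_mulmx p q s (X : 'M[R]_(p, q)) (Y : 'M[R]_(q, s))
    (Z : 'M[R]_(p, s)) N (rf cf : nat -> nat) :
  (forall (a : 'I_N) y,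
     ent Z (rf a) y = \sum_(c < N) ent X (rf a) (rf c) * ent Y (rf c) y) ->
  square_submx Z N rf cf = square_submx X N rf rf *m square_submx Y N rf cf.
Proof.
by move=> eZ; apply/matrixP => a b; rewrite !mxE eZ; apply: eq_bigr => c _; rewrite !mxE.
Qed.

Lemma det_skip_unit_cols N (M : 'M[R]_N) (i j : 'I_N) : val j = N.-1 ->
  (forall (a b : 'I_N), (b < N.-1)%N -> M a b = (val a == bump i b)%:R) ->
  \det M = (-1) ^+ (i + N.-1) * M i j.
Proof.
case: N M i j => [|N] M i j; first by case: i.
move=> jN Munit; have -> : j = ord_max by apply: val_inj.
rewrite (expand_det_row _ i) (bigD1 ord_max) //= big1 ?addr0; last first.
  move=> b bN; rewrite Munit ?(negbTE (neq_bump _ _)) ?mul0r //.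
  by rewrite ltn_neqAle -ltnS ltn_ord andbT; move: bN; rewrite -(inj_eq val_inj).
rewrite /cofactor mulrCA; congr (_ * _).
suff -> : row' i (col' ord_max M) = 1%:M by rewrite det1 mulr1.
have bNb (b : 'I_N) : bump N b = b by rewrite /bump leqNgt ltn_ord.
apply/matrixP => a b; rewrite !mxE Munit /= bNb ?ltn_ord //.
by rewrite (inj_eq (can_inj (bumpK i))).
Qed.

Lemma det_last_unit_col N (M : 'M[R]_N.+1) :
  (forall a, M a ord_max = (a == ord_max)%:R) ->
  \det M = \det (row' ord_max (col' ord_max M)).
Proof.
move=> Munit; rewrite (expand_det_col _ ord_max) (bigD1 ord_max) //= big1 ?addr0; last first.
  by move=> a /negbTE aN; rewrite Munit aN mul0r.
by rewrite Munit eqxx mul1r /cofactor -signr_odd addnn odd_double expr0 mul1r.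
Qed.

End SquareSubmatrices.

Lemma nth_rcons_iota k x a : (a < k.+1)%N ->
  nth 0%N (rcons (iota 0 k) x) a = if (a < k)%N then a else x.
Proof.
move=> ak; rewrite nth_rcons size_iota; case: ltnP => [ak'|ka]; first by rewrite nth_iota.
by rewrite (_ : a == k) // eqn_leq ka -ltnS ak.
Qed.

Lemma nth_skip_iota k i x a : (i < k)%N -> (a < k)%N ->
  nth 0%N (iota 0 i ++ iota i.+1 (k - i.+1) ++ [:: x]) a =
    if (a < k.-1)%N then bump i a else x.
Proof.
move=> ik ak; rewrite nth_cat size_iota /bump.
have [ai|ia] := ltnP a i.
  by rewrite nth_iota // ifT //; lia.
rewrite nth_cat size_iota.
have [aik|kia] := ltnP (a - i) (k - i.+1).
  by rewrite nth_iota // ifT; lia.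
by rewrite ifF; [rewrite (_ : a - i - (k - i.+1) = 0)%N //; lia | lia].
Qed.

Section Reduction.
Variables (R : fieldType) (m n : nat) (A : 'M[R]_(m, n)).

(* [E] stands for the product of the elimination matrices applied so far. *)
Definition partially_reduced k (E : 'M[R]_m) (B : 'M[R]_(m, n)) :=
  [/\ (k <= m)%N, (k <= n)%N, B = E *m A,
      forall l : 'I_m, (k <= l)%N -> col l E = col l 1%:M &
      forall (i : 'I_m) (j : 'I_n), (j < k)%N -> B i j = (i == j :> nat)%:R].

Lemma partially_reduced0 : partially_reduced 0 1%:M A.
Proof. by split; rewrite ?mul1mx. Qed.

Lemma partially_reduced_step k E B : partially_reduced k E B -> ent B k k != 0 ->
  let C := GJ_G1 B k *m B in
  partially_reduced k.+1 (GJ_G2 C k *m GJ_G1 B k *m E) (GJ_G2 C k *m C).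
Proof.
move=> [_ _ BE Eunit Bunit] piv C; have [km kn] := ent_neq0 piv.
pose kk := Ordinal km; pose kj := Ordinal kn.
have Cleft i (j : 'I_n) : (j < k)%N -> C i j = B i j.
  move=> jk; rewrite GJ_G1_mulmxE; case: eqP => // ik.
  by rewrite !Bunit // ik gtn_eqF ?mulr0.
have Cpiv : ent C k k = 1.
  by rewrite -[ent C k k]/(ent C kk kj) entE GJ_G1_mulmxE eqxx -[B kk kj]entE mulVf.
split=> //; first by rewrite /C BE !mulmxA.
- move=> l kl; have lk : l != k :> nat by rewrite gtn_eqF.
  by rewrite !col_mulmx_unit ?col_GJ_G1 ?col_GJ_G2 ?Eunit 1?ltnW.
move=> i j; rewrite ltnS leq_eqVlt => /orP [/eqP jk|jk]; rewrite GJ_G2_mulmxE //.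
  rewrite -[C i j]entE jk Cpiv mulr1 subrr.
  by case: eqP => [->|]; rewrite ?Cpiv.
rewrite -[ent C k j]/(ent C kk j) entE !Cleft // !Bunit //= (gtn_eqF jk).
by rewrite mulr0 subr0 if_same.
Qed.

Lemma GJ2_partially_reduced k : (forall p, (p < k)%N -> ent (GJ2 A p) p p != 0) ->
  exists E, partially_reduced k E (GJ2 A k).
Proof.
elim: k => [_|k IH piv]; first by exists 1%:M; exact: partially_reduced0.
have [E red] := IH (fun p pk => piv p (ltnW pk)).
by eexists; apply: partially_reduced_step red (piv k (ltnSn k)).
Qed.

Section Reduced.
Variables (k : nat) (E : 'M[R]_m) (B : 'M[R]_(m, n)).
Hypothesis red : partially_reduced k E B.

Lemma reduced_unit_col x (l : 'I_m) : (k <= l)%N -> ent E x l = (x == l)%:R.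
Proof.
case: red => _ _ _ Eunit _ kl.
have [xm|mx] := ltnP x m; last by rewrite ent_row_oob // gtn_eqF // (leq_trans _ mx).
have := congr1 (fun c : 'cV[R]_m => c (Ordinal xm) 0) (Eunit l kl).
by rewrite !mxE -[x]/(val (Ordinal xm)) entE.
Qed.

Lemma reduced_unit_row x y : (x < m)%N -> (y < k)%N -> ent B x y = (x == y)%:R.
Proof.
case: red => _ kn _ _ Bunit xm yk; have yn := leq_trans yk kn.
by rewrite -[x]/(val (Ordinal xm)) -[y]/(val (Ordinal yn)) entE Bunit.
Qed.

Lemma reduced_entE x y : ent B x y =
  \sum_(c < k) ent E x c * ent A c y + \sum_(l < m | (k <= l)%N) ent E x l * ent A l y.
Proof.
case: red => km _ BE _ _.
rewrite BE ent_mulmx (bigID (fun l : 'I_m => (l < k)%N)) /=.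
rewrite (big_ord_widen _ (fun c => ent E x c * ent A c y) km).
by congr (_ + _); apply: eq_bigl => l; rewrite -leqNgt.
Qed.

Lemma reduced_ent_top x y : (x < k)%N ->
  ent B x y = \sum_(c < k) ent E x c * ent A c y.
Proof.
move=> xk; rewrite reduced_entE [X in _ + X]big1 ?addr0 // => l kl.
by rewrite reduced_unit_col // ltn_eqF ?mul0r // (leq_trans xk).
Qed.

Lemma reduced_ent_bottom (i : 'I_m) y : (k <= i)%N ->
  ent B i y = \sum_(c < k) ent E i c * ent A c y + ent A i y.
Proof.
move=> ki; rewrite reduced_entE (bigD1 i) //= reduced_unit_col // eqxx mul1r.
rewrite [X in _ + (_ + X)]big1 ?addr0 // => l /andP [kl li].
by rewrite reduced_unit_col // (inj_eq val_inj) eq_sym (negbTE li) mul0r.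
Qed.

Lemma det_reduced_lead_mul : \det (square_submx E k id id) * lead_minor A k = 1.
Proof.
case: red => km _ _ _ _.
rewrite /lead_minor (minor_square_submx _ _ (size_iota 0 k)).
rewrite (eq_square_submx _ (rf' := id) (cf' := id)) => [|a ak|a ak];
  try by rewrite nth_iota.
rewrite -det_mulmx -(square_submx_mulmx (Z := B)) => [|a y]; last exact: reduced_ent_top.
rewrite -(det1 R k); congr (\det _); apply/matrixP => a b; rewrite !mxE reduced_unit_row //.
exact: leq_trans (ltn_ord a) km.
Qed.

Lemma lead_minor_neq0 : lead_minor A k != 0.
Proof.
apply/eqP => m0; have := det_reduced_lead_mul.
by rewrite m0 mulr0 => /eqP; rewrite eq_sym oner_eq0.
Qed.

Lemma det_reduced_lead : \det (square_submx E k id id) = (lead_minor A k)^-1.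
Proof. by rewrite -[LHS]mulr1 -(mulfV lead_minor_neq0) mulrA det_reduced_lead_mul mul1r. Qed.

Lemma reduced_bottom_minorE (i : 'I_m) (j : 'I_n) : (k <= i)%N ->
  B i j = minor A (rcons (iota 0 k) i) (rcons (iota 0 k) j) / lead_minor A k.
Proof.
move=> ki; have km : (k <= m)%N by case: red.
pose rf a := if (a < k)%N then a else val i.
pose cf a := if (a < k)%N then a else val j.
have rf_top a : (a < k)%N -> rf a = a by rewrite /rf => ->.
have rf_k : rf k = i by rewrite /rf ltnn.
have size_rows : size (rcons (iota 0 k) i) = k.+1 by rewrite size_rcons size_iota.
rewrite (minor_square_submx _ _ size_rows).
rewrite (eq_square_submx _ (rf' := rf) (cf' := cf)) => [|a|a]; try exact: nth_rcons_iota.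
have subB : square_submx B k.+1 rf cf =
    square_submx E k.+1 rf rf *m square_submx A k.+1 rf cf.
  apply: square_submx_mulmx => a y; rewrite big_ord_recr /= rf_k.
  under eq_bigr => c _ do rewrite (rf_top _ (ltn_ord c)).
  have [ak|ka] := ltnP a k.
    rewrite rf_top // reduced_ent_top // reduced_unit_col //.
    by rewrite ltn_eqF ?mul0r ?addr0 // (leq_trans ak).
  have -> : rf a = i by rewrite /rf ltnNge ka.
  by rewrite reduced_ent_bottom // reduced_unit_col // eqxx mul1r.
have detB : \det (square_submx B k.+1 rf cf) = B i j.
  rewrite (det_skip_unit_cols (i := ord_max) (j := ord_max)) //= => [|a b bk].
    by rewrite mxE rf_k /cf ltnn entE -signr_odd addnn odd_double mul1r.
  rewrite mxE /cf bk /bump leqNgt bk add0n.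
  have [ak|ka] := ltnP a k; first by rewrite rf_top // reduced_unit_row // (leq_trans ak).
  rewrite /rf ltnNge ka /= reduced_unit_row ?gtn_eqF //; first exact: leq_trans bk ka.
  exact: leq_trans bk ki.
have detE : \det (square_submx E k.+1 rf rf) = \det (square_submx E k id id).
  rewrite det_last_unit_col => [|a]; last first.
    rewrite mxE rf_k reduced_unit_col // -(inj_eq val_inj) /=.
    have [ak|ka] := ltnP a k; last first.
      by rewrite /rf ltnNge ka /= !eqxx eqn_leq ka -ltnS ltn_ord.
    by rewrite rf_top // !ltn_eqF // (leq_trans ak).
  by congr (\det _); apply/matrixP => a b; rewrite !mxE !rf_top ?lift_max.
by rewrite -detB subB det_mulmx detE det_reduced_lead mulrC.
Qed.

Lemma reduced_top_minorE (i : 'I_m) (j : 'I_n) : (i < k)%N ->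
  B i j = (-1) ^+ (k + i.+1) *
    minor A (iota 0 k) (iota 0 i ++ iota i.+1 (k - i.+1) ++ [:: val j])
    / lead_minor A k.
Proof.
move=> ik; have km : (k <= m)%N by case: red.
pose cf a := if (a < k.-1)%N then bump i a else val j.
rewrite (minor_square_submx _ _ (size_iota 0 k)).
rewrite (eq_square_submx _ (rf' := id) (cf' := cf)) => [|a ak|a ak].
- have subB : square_submx B k id cf = square_submx E k id id *m square_submx A k id cf.
    by apply: square_submx_mulmx => a y; apply: reduced_ent_top.
  have k1k : (k.-1 < k)%N by rewrite prednK // (leq_ltn_trans _ ik).
  have detB : \det (square_submx B k id cf) = (-1) ^+ (i + k.-1) * B i j.
    rewrite (det_skip_unit_cols (i := Ordinal ik) (j := Ordinal k1k)) //= => [|a b bk].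
      by rewrite mxE /cf ltnn entE.
    rewrite mxE /cf bk reduced_unit_row ?(leq_trans _ km) //.
    by rewrite /bump; case: (i <= b)%N; rewrite /= ?add0n ?add1n //; lia.
  rewrite subB det_mulmx det_reduced_lead in detB.
  have sign_cancel : (-1) ^+ (k + i.+1) * (-1) ^+ (i + k.-1) = 1 :> R.
    rewrite -exprD -signr_odd (_ : (k + i.+1 + (i + k.-1) = (i + k).*2)%N) ?odd_double //.
    lia.
  by rewrite -mulrA [_ / _]mulrC detB mulrA sign_cancel mul1r.
- by rewrite nth_iota.
- exact: nth_skip_iota.
Qed.

End Reduced.
End Reduction.

Unset Implicit Arguments.
Set Strict Implicit.

Theorem theorem2p6 (R : realType) (m n : nat) (A : 'M[R]_(m, n)) (r k : nat) :
  \rank A = r -> (1 < r)%N -> diag_elim A r -> (k < r)%N ->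
  (forall (i : 'I_m) (j : 'I_n), (j < k)%N ->
      GJ A (2 * k) i j = (i == j :> nat)%:R) /\
  (forall (i : 'I_m) (j : 'I_n), (k <= j)%N ->
      GJ A (2 * k) i j =
        if (i < k)%N then
          (-1) ^+ (k + i.+1) *
            minor A (iota 0 k) (iota 0 i ++ iota i.+1 (k - i.+1) ++ [:: val j])
            / lead_minor A k
        else
          minor A (rcons (iota 0 k) (val i)) (rcons (iota 0 k) (val j))
            / lead_minor A k).
Proof.
move=> _ _ elim_r kr.
have pivots p : (p < k)%N -> ent (GJ2 A p) p p != 0.
  move=> pk; rewrite -GJ_even (_ : 2 * p = 2 * p.+1 - 2)%N; last by lia.
  by apply: elim_r; lia.
have [E red] := GJ2_partially_reduced pivots.
rewrite GJ_even; split; first by case: red.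
move=> i j _; case: ltnP => [ik|ki].
  exact: (reduced_top_minorE red).
exact: (reduced_bottom_minorE red).
Qed.
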